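(* Let $\alpha,\mu$ be partitions with $\mu$ strict. Let $\alpha^-$ be any partition obtained by deleting the top $k$ rows (i.e. the $k$ largest parts) of $\alpha$, where $0\le k<m(\alpha)$. Fix $a>\alpha_1$ and $m>0$ and set $\alpha^+=(a^m,\alpha_1,\alpha_2,\ldots)$. Then: (i) $\alpha$ contains $\mu$ if and only if $\alpha^-$ contains $\mu$; (ii) $\alpha$ contains $\mu$ if and only if $\alpha^+$ contains $\overline\mu$; (iii) for every $c$ with $0<c\le m(\alpha)$, $\alpha$ contains $\mu$ if and only if $\alpha+(1^c)$ contains $\mu+(1)$.
   Context: Partitions are weakly decreasing sequences of nonnegative integers with finitely many nonzero parts, identified with Ferrers boards (row $i$ has $\alpha_i$ boxes). $\alpha$ contains $\mu$ if deleting some rows and some columns of the Ferrers board of $\alpha$ and top/left-justifying yields $\mu$. Strict: positive parts distinct. $m(\alpha)$ is the multiplicity of the largest part of $\alpha$. $(a^m,\alpha_1,\ldots)$ denotes $m$ parts equal to $a$ followed by the parts of $\alpha$. $\alpha+\beta$ is the componentwise sum and $(1^c)$ has $c$ parts equal to $1$. $\overline\mu=(\mu_1+1,\mu_1,\mu_2,\ldots)$. *)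

From mathcomp Require Import all_boot.
Set Implicit Arguments. Unset Strict Implicit. Unset Printing Implicit Defensive.

(* A partition is represented by the list of its positive parts, weakly
   decreasing (trailing zero parts are omitted). *)
Definition is_partition (s : seq nat) : bool :=
  sorted geq s && all (fun x => 0 < x) s.

Definition is_strict (s : seq nat) : bool := is_partition s && uniq s.

Definition largest (s : seq nat) : nat := foldr maxn 0 s.

Definition mult_largest (s : seq nat) : nat := count (pred1 (largest s)) s.

(* Ferrers board of alpha: cells (i,j) with j < alpha_i.  Keep the rows
   selected by the bitmask rm and the columns selected by the bitmask cm
   (among the columns 0 .. alpha_1 - 1; other columns contain no cells);
   after top/left justification, the kept row with original length a has
   as many boxes as there are kept columns c < a. *)
Definition delete_justify (alpha : seq nat) (rm cm : bitseq) : seq nat :=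
  [seq x <- [seq count (fun c => c < a) (mask cm (iota 0 (largest alpha)))
            | a <- mask rm alpha] | x != 0].

Definition contains (alpha mu : seq nat) : Prop :=
  exists rm cm : bitseq, delete_justify alpha rm cm = [seq x <- mu | x != 0].

Definition prepend_parts (a m : nat) (alpha : seq nat) : seq nat :=
  nseq m a ++ alpha.

Definition add_ones (c : nat) (alpha : seq nat) : seq nat :=
  mkseq (fun i => nth 0 alpha i + (i < c)) (maxn c (size alpha)).

Definition mubar (mu : seq nat) : seq nat := (largest mu).+1 :: mu.

From mathcomp Require Import all_boot zify.
Set Implicit Arguments. Unset Strict Implicit. Unset Printing Implicit Defensive.

(* Deleting rows and columns of the Ferrers board of alpha keeps a subsequence
   s of the rows and a set C of columns; the justified row of original length
   a then has #{c in C | c < a} boxes.  Since this count grows by at most one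
   per column, the gaps mu_j - mu_(j+1) of the result are bounded by the gaps
   s_j - s_(j+1) of the kept rows; conversely, any such s is realised by
   explicitly chosen columns.  This gives the characterisation
   [contains_iff_gap_witness]: for a partition mu, alpha contains mu iff alpha
   has a subsequence s of length |mu| whose gaps dominate those of mu (parts
   beyond the end counting as 0).  For strict mu all gaps of mu are positive,
   so such an s is strictly decreasing: it uses the largest part L of alpha at
   most once, as its first entry.  Writing alpha = L^m ++ t with all parts of
   t below L, the three statements of the theorem become simple exchanges of
   the first entry of a witness ([contains_drop_top], [contains_prepend_top],
   [contains_add_ones_top]). *)

Lemma geq_trans : transitive geq.
Proof. by move=> y x z /= yx zy; apply: leq_trans zy yx. Qed.

Lemma gtn_trans : transitive gtn.
Proof. by move=> y x z /= yx zy; apply: ltn_trans zy yx. Qed.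

Lemma sorted_le_head s j : sorted geq s -> nth 0 s j <= head 0 s.
Proof.
move=> ss; case: (ltnP j (size s)) => hj; last by rewrite nth_default.
rewrite -nth0; apply: (sorted_leq_nth geq_trans) => //; last by rewrite inE; lia.
by move=> x /=.
Qed.

Lemma sorted_gtn_uniq s : sorted gtn s = uniq s && sorted geq s.
Proof.
have rev_gtn : sorted gtn s = sorted ltn (rev s) by rewrite rev_sorted.
by rewrite rev_gtn ltn_sorted_uniq_leq rev_uniq rev_sorted.
Qed.

Lemma strict_partition_props mu : is_strict mu ->
  [/\ sorted gtn mu, sorted geq mu & all (fun x => 0 < x) mu].
Proof. by case/andP=> /andP[smu pmu] umu; rewrite sorted_gtn_uniq umu smu. Qed.

(* The gaps of s dominate those of mu:  mu_j - mu_(j+1) <= s_j - s_(j+1)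
   for all j < |mu|, written without truncated subtraction. *)
Definition gaps_dominate (s mu : seq nat) : Prop :=
  forall j, j < size mu -> nth 0 mu j + nth 0 s j.+1 <= nth 0 s j + nth 0 mu j.+1.

Definition gap_witness (alpha mu : seq nat) : Prop :=
  exists s, [/\ subseq s alpha, size s = size mu & gaps_dominate s mu].

Lemma gaps_dominate_cons x s y mu :
  gaps_dominate (x :: s) (y :: mu) <->
  y + head 0 s <= x + head 0 mu /\ gaps_dominate s mu.
Proof.
split=> [gd | [g0 gd]].
  split=> [|j hj]; last exact: (gd j.+1).
  by have := gd 0 erefl; rewrite /= !nth0.
by case=> [|j] hj; [rewrite /= !nth0 | apply: gd].
Qed.

Lemma gaps_dominate_sorted (r : rel nat) s mu :
  (forall a b c d, r a b -> a + d <= c + b -> r c d) ->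
  sorted r mu -> size s = size mu -> gaps_dominate s mu -> sorted r s.
Proof.
move=> transfer /(sortedP 0) smu sz gd; apply/(sortedP 0) => j hj.
by apply: (transfer _ _ _ _ (smu j _) (gd j _)); rewrite -sz; lia.
Qed.

(* For strict mu the witness is strictly decreasing: below its first entry. *)
Lemma strict_witness_tail x s mu :
  sorted gtn mu -> size (x :: s) = size mu -> gaps_dominate (x :: s) mu ->
  all (fun z => z < x) s.
Proof.
move=> gmu sz gd; apply: (order_path_min gtn_trans).
by apply: (gaps_dominate_sorted _ gmu sz gd) => a b c d /=; lia.
Qed.

Definition cols_below (C : seq nat) (a : nat) : nat := count (fun c => c < a) C.

(* Distinct columns: between positions b and a lie at most a - b of them. *)
Lemma cols_below_lipschitz C a b :
  uniq C -> b <= a -> cols_below C a + b <= a + cols_below C b.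
Proof.
move=> uC ba.
have -> : cols_below C a = cols_below C b + count (fun c => b <= c < a) C.
  by rewrite /cols_below; elim: (C) => //= c C' ->; lia.
suff : count (fun c => b <= c < a) C <= a - b by lia.
rewrite -size_filter -(size_iota b (a - b)); apply: uniq_leq_size.
  exact: filter_uniq.
by move=> c; rewrite mem_filter mem_iota => /andP[]; lia.
Qed.

Lemma map_lipschitz_gaps f s : f 0 = 0 ->
  (forall a b, b <= a -> f a + b <= a + f b) ->
  sorted geq s -> gaps_dominate s (map f s).
Proof.
move=> f0 lip /(sortedP 0) ss j; rewrite size_map => hj; rewrite (nth_map 0) //.
have [hj1 | hj1] := ltnP j.+1 (size s).
  by rewrite (nth_map 0) //; apply/lip/ss.
rewrite [nth 0 s j.+1]nth_default // [nth 0 (map f s) _]nth_default ?size_map //.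
by have := lip (nth 0 s j) 0; rewrite f0; lia.
Qed.

Lemma contains_gap_witness alpha mu :
  sorted geq alpha -> all (fun x => 0 < x) mu ->
  contains alpha mu -> gap_witness alpha mu.
Proof.
move=> sa pmu [rm [cm]]; rewrite /delete_justify.
set C := mask cm _; have uC : uniq C by apply/mask_uniq/iota_uniq.
have -> : [seq x <- mu | x != 0] = mu.
  by apply/all_filterP; apply: sub_all pmu => x; rewrite lt0n.
rewrite filter_map => <-; set s := filter _ _.
have sub : subseq s alpha := subseq_trans (filter_subseq _ _) (mask_subseq _ _).
exists s; split; rewrite ?size_map //.
apply: (map_lipschitz_gaps (f := cols_below C)).
- by rewrite /cols_below; elim: (C).
- by move=> a b; apply: cols_below_lipschitz.
- exact: (subseq_sorted geq_trans sub sa).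
Qed.

(* Column bitmask realising mu from the rows s, built from the bottom row up:
   below row x (whose successor row is s'), keep y - mu'_1 of the columns
   between s'_1 and x, namely the leftmost ones. *)
Fixpoint column_mask (s mu : seq nat) : bitseq :=
  match s, mu with
  | x :: s', y :: mu' =>
      column_mask s' mu' ++ nseq (y - head 0 mu') true
                         ++ nseq (x - head 0 s' - (y - head 0 mu')) false
  | _, _ => [::]
  end.

Lemma count_lt_mask m k a :
  count (fun c => c < k + a) (mask m (iota k (size m))) = count id (take a m).
Proof.
elim: m k a => [|b m IH] k [|a] //.
  rewrite take0 addn0; apply/eqP; rewrite -leqn0 leqNgt -has_count.
  by apply/hasPn => c /mem_mask; rewrite mem_iota; lia.
by case: b; rewrite /= -addSnnS IH; lia.
Qed.

Lemma column_mask_spec s mu :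
  sorted geq mu -> size s = size mu -> gaps_dominate s mu ->
  size (column_mask s mu) = head 0 s /\ count id (column_mask s mu) = head 0 mu.
Proof.
elim: s mu => [|x s' IH] [|y mu'] //= smu' [sz] /gaps_dominate_cons[g0 gd].
have [IHsize IHcount] := IH mu' (path_sorted smu') sz gd.
have mu'y : head 0 mu' <= y by case: (mu') smu' => //= z ? /andP[].
by rewrite !size_cat !count_cat !size_nseq !count_nseq IHsize IHcount /=; lia.
Qed.

Lemma column_mask_rows s mu j :
  sorted geq mu -> size s = size mu -> gaps_dominate s mu ->
  count id (take (nth 0 s j) (column_mask s mu)) = nth 0 mu j.
Proof.
elim: s mu j => [|x s' IH] [|y mu'] // j smu' sz // gd'.
  by rewrite !nth_nil.
case: sz => sz; have /gaps_dominate_cons[_ gd] := gd'.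
case: j => [|j].
  have [sz0 cnt0] :=
    column_mask_spec (s := x :: s') (mu := y :: mu') smu' (f_equal succn sz) gd'.
  by rewrite !nth0 -sz0 -cnt0 take_size.
rewrite /= takel_cat; first exact: IH (path_sorted smu') sz gd.
have [-> _] := column_mask_spec (path_sorted smu') sz gd.
apply: sorted_le_head.
by apply: (gaps_dominate_sorted _ (path_sorted smu') sz gd) => a b c d /=; lia.
Qed.

Lemma largest_ge alpha x : x \in alpha -> x <= largest alpha.
Proof.
elim: alpha => //= y r IH; rewrite inE => /orP[/eqP -> | /IH].
  exact: leq_maxl.
by move/leq_trans; apply; apply: leq_maxr.
Qed.

Lemma all_le_largest alpha : all (fun z => z <= largest alpha) alpha.
Proof. by apply/allP => z /largest_ge. Qed.

Lemma head_subseq_le b s w :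
  all (fun z => z <= b) w -> subseq s w -> head 0 s <= b.
Proof.
case: s => [|x s] //= bw /mem_subseq/(_ x (mem_head x s)).
exact: (allP bw).
Qed.

Lemma gap_witness_contains alpha mu :
  sorted geq mu -> gap_witness alpha mu -> contains alpha mu.
Proof.
move=> smu [s [/subseqP[rm _ ->] sz gd]].
have ss : sorted geq (mask rm alpha).
  by apply: (gaps_dominate_sorted _ smu sz gd) => a b c d /=; lia.
have [size_mask _] := column_mask_spec smu sz gd.
have head_le : head 0 (mask rm alpha) <= largest alpha :=
  head_subseq_le (all_le_largest alpha) (mask_subseq rm alpha).
pose cm := column_mask (mask rm alpha) mu
           ++ nseq (largest alpha - head 0 (mask rm alpha)) false.
have size_cm : size cm = largest alpha.
  by rewrite /cm size_cat size_nseq size_mask subnKC.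
exists rm, cm; rewrite /delete_justify; congr filter.
apply: (@eq_from_nth _ 0); rewrite size_map // => j hj.
rewrite (nth_map 0) // -size_cm -[nth 0 _ j]add0n count_lt_mask takel_cat.
  exact: column_mask_rows.
by rewrite size_mask; apply: sorted_le_head.
Qed.

Lemma contains_iff_gap_witness alpha mu :
  sorted geq alpha -> sorted geq mu -> all (fun x => 0 < x) mu ->
  contains alpha mu <-> gap_witness alpha mu.
Proof.
move=> sa smu pmu.
by split; [apply: contains_gap_witness | apply: gap_witness_contains].
Qed.

Lemma largest_le b s : all (fun z => z <= b) s -> largest s <= b.
Proof. by elim: s => //= y s IH /andP[yb /IH]; rewrite geq_max yb. Qed.

Lemma largest_head s : sorted geq s -> largest s = head 0 s.
Proof.
case: s => [|x s] //= ss.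
by apply/maxn_idPl/largest_le/(order_path_min geq_trans ss).
Qed.

Lemma top_block_split L alpha :
  sorted geq alpha -> all (fun z => z <= L) alpha ->
  alpha = nseq (count (pred1 L) alpha) L ++ [seq z <- alpha | z < L].
Proof.
elim: alpha => //= x r IH sa /andP[xL rL]; have sr := path_sorted sa.
have [<- | xnL] := eqVneq L x; first by rewrite add1n ltnn /= -IH.
have lt_x : forall z, z \in x :: r -> z < L.
  move=> z; rewrite inE => /orP[/eqP -> | /(allP (order_path_min geq_trans sa)) /=].
    by rewrite ltn_neqAle eq_sym xnL.
  by move/leq_ltn_trans; apply; rewrite ltn_neqAle eq_sym xnL.
have -> : count_mem L r = 0.
  apply/count_memPn/negP => Lr; have := lt_x L.
  by rewrite inE Lr orbT ltnn => /(_ isT).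
rewrite lt_x ?mem_head //; congr cons; apply/esym/all_filterP/allP => z zr.
by apply: lt_x; rewrite inE zr orbT.
Qed.

Lemma top_block_decomposition alpha :
  sorted geq alpha ->
  exists2 t, alpha = nseq (mult_largest alpha) (largest alpha) ++ t
           & sorted geq t /\ all (fun z => z < largest alpha) t.
Proof.
move=> sa; exists [seq z <- alpha | z < largest alpha].
  exact: top_block_split sa (all_le_largest alpha).
by split; [apply: sorted_filter geq_trans _ _ sa | apply: filter_all].
Qed.

Lemma sorted_nseq_cat n x t :
  sorted geq t -> all (fun z => z <= x) t -> sorted geq (nseq n x ++ t).
Proof.
move=> st tx; elim: n => //= n IH.
by rewrite (path_sortedE geq_trans) IH andbT all_cat all_nseq /= leqnn orbT.
Qed.

Lemma add_ones_take c alpha : c <= size alpha ->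
  add_ones c alpha = map succn (take c alpha) ++ drop c alpha.
Proof.
move=> hc; rewrite /add_ones (maxn_idPr hc).
apply: (@eq_from_nth _ 0).
  by rewrite size_mkseq size_cat size_map size_takel // size_drop subnKC.
move=> j; rewrite size_mkseq => hj.
rewrite nth_mkseq // nth_cat size_map size_takel //.
case: (ltnP j c) => hjc.
  by rewrite (nth_map 0) ?size_takel // nth_take // addn1.
by rewrite nth_drop subnKC // addn0.
Qed.

Lemma add_ones_top_block c m L t : c <= m ->
  add_ones c (nseq m L ++ t) = nseq c L.+1 ++ nseq (m - c) L ++ t.
Proof.
move=> cm; rewrite add_ones_take ?size_cat ?size_nseq ?(leq_trans cm (leq_addr _ _)) //.
rewrite -(subnKC cm) nseqD -catA subnKC //.
by rewrite take_size_cat ?drop_size_cat ?size_nseq // map_nseq.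
Qed.

Lemma add_one_head mu : add_ones 1 mu = (head 0 mu).+1 :: behead mu.
Proof. by case: mu => [|y r] //; rewrite add_ones_take //= take0 drop0. Qed.

Lemma subseq_below b u t s :
  all (fun z => z < b) s -> all (fun z => b <= z) u ->
  subseq s (u ++ t) -> subseq s t.
Proof.
elim: u s => [|y u IH] s sb; first by move=> _.
case/andP=> by_ bu; case: s sb => [|z s] sb; first by move=> _; apply: sub0seq.
have /negbTE/= -> : z != y.
  by move: sb => /andP[zb _]; rewrite neq_ltn (leq_trans zb by_).
exact: IH.
Qed.

Lemma subseq_tail_below b u t x s :
  all (fun z => z < x) s -> x <= b -> all (fun z => b <= z) u ->
  subseq (x :: s) (u ++ t) -> subseq s t.
Proof.
move=> sx xb ub /cons_subseq; apply: subseq_below ub.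
by apply: sub_all sx => z zx; apply: leq_trans xb.
Qed.

Lemma all_nseq_ge n L : all (fun z => L <= z) (nseq n L).
Proof. by rewrite all_nseq leqnn orbT. Qed.

(* A strictly decreasing subsequence uses at most one copy of the top part. *)
Lemma subseq_top_block n m L t x s :
  0 < n -> all (fun z => z < x) s -> x <= L -> all (fun z => z < L) t ->
  subseq (x :: s) (nseq m L ++ t) -> subseq (x :: s) (nseq n L ++ t).
Proof.
move=> n0 sx xL tL sub.
have st : subseq s t := subseq_tail_below sx xL (all_nseq_ge m L) sub.
have [xlt | xge] := ltnP x L.
  apply: subseq_trans (suffix_subseq _ t); apply: subseq_below (all_nseq_ge m L) sub.
  by rewrite /= xlt; apply: sub_all sx => z zx; apply: ltn_trans xlt.
have -> : x = L by apply/eqP; rewrite eqn_leq xL xge.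
by rewrite -(prednK n0) /= eqxx; apply: subseq_trans st (suffix_subseq _ _).
Qed.

Lemma gap_witness_raise_top c m L t y r :
  0 < c -> all (fun z => z < L) t -> sorted gtn (y :: r) ->
  gap_witness (nseq m L ++ t) (y :: r) ->
  gap_witness (nseq c L.+1 ++ nseq (m - c) L ++ t) (y.+1 :: r).
Proof.
move=> c0 tL gmu [[|x s] [sub sz gd]] //; have /gaps_dominate_cons[g0 gd'] := gd.
have xL : x <= L.
  apply: head_subseq_le sub; rewrite all_cat all_nseq leqnn orbT.
  by apply: sub_all tL => z /ltnW.
have st : subseq s t :=
  subseq_tail_below (strict_witness_tail gmu sz gd) xL (all_nseq_ge m L) sub.
exists (L.+1 :: s); split=> //.
  rewrite -(prednK c0) /= eqxx catA.
  exact: subseq_trans st (suffix_subseq _ _).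
by apply/gaps_dominate_cons; split=> //; lia.
Qed.

(* Truncating all parts at L turns a witness for (y + 1, r) into one for
   (y, r): only the first entry of the witness can exceed L. *)
Lemma gap_witness_truncate L beta y r :
  all (fun z => z <= L.+1) beta -> sorted gtn (y.+1 :: r) ->
  gap_witness beta (y.+1 :: r) -> gap_witness (map (minn^~ L) beta) (y :: r).
Proof.
move=> bL gnu [[|x s] [sub sz gd]] //; have /gaps_dominate_cons[g0 gd'] := gd.
have xL : x <= L.+1 := head_subseq_le bL sub.
have s_fixed : {in s, minn^~ L =1 id}.
  move=> z /(allP (strict_witness_tail gnu sz gd)) zx /=.
  by apply/minn_idPl; rewrite -ltnS; apply: leq_trans zx xL.
exists (minn x L :: s); split=> //.
  by rewrite -[s](map_id_in s_fixed); apply: (map_subseq _ sub).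
by apply/gaps_dominate_cons; split=> //; lia.
Qed.

Lemma contains_drop_top alpha mu k :
  is_partition alpha -> is_strict mu -> k < mult_largest alpha ->
  contains alpha mu <-> contains (drop k alpha) mu.
Proof.
move=> /andP[sa _] /strict_partition_props[gmu smu pmu] hk.
have sd : sorted geq (drop k alpha) := subseq_sorted geq_trans (drop_subseq _ _) sa.
rewrite !contains_iff_gap_witness //.
split=> [] [s [sub sz gd]]; exists s; split=> //; last first.
  exact: subseq_trans sub (drop_subseq _ _).
case: s sub sz gd => [|x s] sub sz gd; first exact: sub0seq.
have xL := head_subseq_le (all_le_largest alpha) sub.
have [t Ea [_ tL]] := top_block_decomposition sa.
move: sub; rewrite Ea drop_cat size_nseq hk drop_nseq.
by apply: subseq_top_block (strict_witness_tail gmu sz gd) xL tL; rewrite subn_gt0.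
Qed.

Lemma contains_prepend_top alpha mu a m :
  is_partition alpha -> is_strict mu -> largest alpha < a -> 0 < m ->
  contains alpha mu <-> contains (prepend_parts a m alpha) (mubar mu).
Proof.
move=> /andP[sa _] /strict_partition_props[gmu smu pmu] ha m0.
have alpha_a : all (fun z => z <= a) alpha.
  by apply: sub_all (all_le_largest alpha) => z zL; apply: leq_trans zL (ltnW ha).
have sp : sorted geq (prepend_parts a m alpha) := sorted_nseq_cat m sa alpha_a.
have gbar : sorted gtn (mubar mu).
  rewrite /mubar /= (path_sortedE gtn_trans) gmu andbT.
  by apply/allP => z /largest_ge.
have sbar : sorted geq (mubar mu) by move: gbar; rewrite sorted_gtn_uniq => /andP[].
rewrite !contains_iff_gap_witness //= /mubar.
split=> [[s [sub sz gd]] | [[|x s] [sub sz gd]] //].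
  exists (a :: s); split; [|by rewrite /= sz|].
    rewrite /prepend_parts -(prednK m0) /= eqxx.
    exact: subseq_trans sub (suffix_subseq _ _).
  apply/gaps_dominate_cons; split=> //.
  have := head_subseq_le (all_le_largest alpha) sub.
  by rewrite (largest_head smu); lia.
have /gaps_dominate_cons[_ gd'] := gd.
exists s; split=> //; last by case: sz.
have xa : x <= a by apply: head_subseq_le sub; rewrite all_cat all_nseq leqnn orbT.
exact: subseq_tail_below (strict_witness_tail gbar sz gd) xa (all_nseq_ge m a) sub.
Qed.

Lemma contains_add_ones_top alpha mu c :
  is_partition alpha -> is_strict mu -> 0 < c <= mult_largest alpha ->
  contains alpha mu <-> contains (add_ones c alpha) (add_ones 1 mu).
Proof.
move=> /andP[sa _] /strict_partition_props[gmu smu pmu] /andP[c0 cm].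
have [t Ea [st tL]] := top_block_decomposition sa.
set L := largest alpha in Ea tL; set m := mult_largest alpha in Ea cm.
have tL' : all (fun z => z <= L.+1) t by apply: sub_all tL => z /ltnW/leqW.
have Eb : add_ones c alpha = nseq c L.+1 ++ nseq (m - c) L ++ t.
  by rewrite {1}Ea add_ones_top_block.
have bL : all (fun z => z <= L.+1) (add_ones c alpha).
  by rewrite Eb !all_cat !all_nseq leqnn leqnSn tL' !orbT.
have sb : sorted geq (add_ones c alpha).
  rewrite Eb !sorted_nseq_cat // ?all_cat ?all_nseq ?leqnSn ?orbT //.
  by apply: sub_all tL => z /ltnW.
have Emin : map (minn^~ L) (add_ones c alpha) = alpha.
  rewrite Eb !map_cat !map_nseq (minn_idPr (leqnSn L)) minnn catA -nseqD subnKC //.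
  by rewrite map_id_in // => z /(allP tL) /ltnW /minn_idPl.
rewrite add_one_head; case: mu gmu smu pmu => [|y r] gmu smu pmu /=.
  rewrite !contains_iff_gap_witness //.
  split=> _; last by exists [::]; split=> //; apply: sub0seq.
  exists [:: L.+1]; split=> //; last by case.
  by rewrite Eb -(prednK c0) /= eqxx sub0seq.
have gnu : sorted gtn (y.+1 :: r).
  move: gmu; rewrite /= !(path_sortedE gtn_trans) => /andP[ry ->].
  by rewrite andbT; apply: sub_all ry => z /ltnW.
have snu : sorted geq (y.+1 :: r) by move: gnu; rewrite sorted_gtn_uniq => /andP[].
have pnu : all (fun x => 0 < x) (y.+1 :: r) by case/andP: pmu.
rewrite !contains_iff_gap_witness //; split.
  by rewrite {1}Ea Eb; apply: gap_witness_raise_top.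
by move/(gap_witness_truncate bL gnu); rewrite Emin.
Qed.

Theorem mainTheorem10 (alpha mu : seq nat) :
  is_partition alpha -> is_strict mu ->
  (forall k : nat, k < mult_largest alpha ->
     (contains alpha mu <-> contains (drop k alpha) mu)) /\
  (forall a m : nat, largest alpha < a -> 0 < m ->
     (contains alpha mu <-> contains (prepend_parts a m alpha) (mubar mu))) /\
  (forall c : nat, 0 < c <= mult_largest alpha ->
     (contains alpha mu <-> contains (add_ones c alpha) (add_ones 1 mu))).
Proof.
move=> pa smu; split; [|split].
- by move=> k; apply: contains_drop_top.
- by move=> a m; apply: contains_prepend_top.
- by move=> c; apply: contains_add_ones_top.
Qed.
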